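(* Every integral non-associative algebra is semi-associative: if $\mathcal A$ is a non-associative algebra such that $x;y=0$ implies $x=0$ or $y=0$, then $x;(1;1)=(x;1);1$ for all $x\in A$.
   Context: A non-associative algebra is an algebra $(A,0,1,+,-,1',\breve{\ },;)$ such that $(A,0,1,+,-)$ is a boolean algebra (with $x\cdot y=-(-x+-y)$ and $x\le y\iff x+y=y$); $1';x=x=x;1'$, $\breve{\breve x}=x$, $(x;y)\breve{}=\breve y;\breve x$; $\breve 0=x;0=0$, $(x+y)\breve{}=\breve x+\breve y$, $x;(y+z)=x;y+x;z$; and the Peircean law holds: $x;y\cdot\breve z=0$ iff $y;z\cdot\breve x=0$. *)

(* Signature (A,0,1,+,-,1',converse,;) *)
Record NAAlgebra := {
  carrier :> Type;
  zero : carrier;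
  one : carrier;
  join : carrier -> carrier -> carrier;
  compl : carrier -> carrier;
  ident : carrier;
  conv : carrier -> carrier;
  comp : carrier -> carrier -> carrier
}.

Definition meet (A : NAAlgebra) (x y : A) : A :=
  compl A (join A (compl A x) (compl A y)).

Definition le (A : NAAlgebra) (x y : A) : Prop := join A x y = y.

Definition is_boolean_algebra (A : NAAlgebra) : Prop :=
  (forall x y : A, join A x y = join A y x) /\
  (forall x y : A, @meet A x y = @meet A y x) /\
  (forall x y z : A, join A x (join A y z) = join A (join A x y) z) /\
  (forall x y z : A, @meet A x (@meet A y z) = @meet A (@meet A x y) z) /\
  (forall x y z : A, join A x (@meet A y z) = @meet A (join A x y) (join A x z)) /\
  (forall x y z : A, @meet A x (join A y z) = join A (@meet A x y) (@meet A x z)) /\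
  (forall x : A, join A x (zero A) = x) /\
  (forall x : A, @meet A x (one A) = x) /\
  (forall x : A, join A x (compl A x) = one A) /\
  (forall x : A, @meet A x (compl A x) = zero A).

Definition is_nonassociative_algebra (A : NAAlgebra) : Prop :=
  is_boolean_algebra A /\
  (forall x : A, comp A (ident A) x = x /\ comp A x (ident A) = x) /\
  (forall x : A, conv A (conv A x) = x) /\
  (forall x y : A, conv A (comp A x y) = comp A (conv A y) (conv A x)) /\
  (conv A (zero A) = zero A) /\
  (forall x : A, comp A x (zero A) = zero A) /\
  (forall x y : A, conv A (join A x y) = join A (conv A x) (conv A y)) /\
  (forall x y z : A, comp A x (join A y z) = join A (comp A x y) (comp A x z)) /\
  (forall x y z : A,
      @meet A (comp A x y) (conv A z) = zero A <->
      @meet A (comp A y z) (conv A x) = zero A).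

Definition integral (A : NAAlgebra) : Prop :=
  forall x y : A, comp A x y = zero A -> x = zero A \/ y = zero A.

Definition semi_associative (A : NAAlgebra) : Prop :=
  forall x : A, comp A x (comp A (one A) (one A)) = comp A (comp A x (one A)) (one A).

(* In any non-associative algebra the Peircean law, applied twice to the
   disjoint pair x;1 and -(x;1), gives (-(x;1))˘ ; x = 0.  In an integral
   algebra this forces x = 0 or x;1 = 1.  Since 1;1 = 1 always (because
   1' <= 1), both sides of x;(1;1) = (x;1);1 reduce to 0 or to 1. *)


Section BooleanAlgebra.

Variable A : NAAlgebra.
Hypothesis HB : is_boolean_algebra A.

Lemma join_one_r (a : A) : join A a (one A) = one A.
Proof.
  pose proof HB as [_ [mC [_ [_ [jD [_ [_ [m1 [jc _]]]]]]]]].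
  transitivity (meet A (join A a (one A)) (join A a (compl A a))).
  - rewrite jc. symmetry. apply m1.
  - rewrite <- jD, mC, m1. apply jc.
Qed.

Lemma compl_eq0 (a : A) : compl A a = zero A -> a = one A.
Proof.
  pose proof HB as [_ [_ [_ [_ [_ [_ [j0 [_ [jc _]]]]]]]]].
  intro Ha. rewrite <- (j0 a), <- Ha. apply jc.
Qed.

End BooleanAlgebra.

Section NonAssociativeAlgebra.

Variable A : NAAlgebra.
Hypothesis HA : is_nonassociative_algebra A.

Let HB : is_boolean_algebra A := proj1 HA.

Lemma conv_one : conv A (one A) = one A.
Proof.
  pose proof HA as [[jC _] [_ [cc [_ [_ [_ [cj _]]]]]]].
  assert (H : conv A (join A (one A) (conv A (one A))) = conv A (one A)).
  { rewrite jC, join_one_r by exact HB. reflexivity. }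
  rewrite cj, cc in H. rewrite <- H. apply join_one_r, HB.
Qed.

Lemma comp_zero_l (a : A) : comp A (zero A) a = zero A.
Proof.
  pose proof HA as [_ [_ [cc [cm [c0 [x0 _]]]]]].
  rewrite <- (cc (comp A (zero A) a)), cm, c0, x0. exact c0.
Qed.

Lemma comp_one_one : comp A (one A) (one A) = one A.
Proof.
  pose proof HA as [[jC _] [idl [_ [_ [_ [_ [_ [cD _]]]]]]]].
  transitivity (comp A (one A) (join A (one A) (ident A))).
  - rewrite jC, join_one_r by exact HB. reflexivity.
  - rewrite cD, (proj2 (idl (one A))). apply join_one_r, HB.
Qed.

Lemma comp_conv_compl_comp_one (x : A) :
  comp A (conv A (compl A (comp A x (one A)))) x = zero A.
Proof.
  pose proof HA as [[_ [_ [_ [_ [_ [_ [_ [m1 [_ mc]]]]]]]]]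
                  [_ [cc [_ [_ [_ [_ [_ peirce]]]]]]]].
  set (y := compl A (comp A x (one A))).
  assert (Hxy : meet A (comp A x (one A)) (conv A (conv A y)) = zero A).
  { rewrite cc. apply mc. }
  apply (proj1 (peirce _ _ _)), (proj1 (peirce _ _ _)) in Hxy.
  rewrite conv_one, m1 in Hxy. exact Hxy.
Qed.

Hypothesis Hint : integral A.

Lemma integral_eq0_or_comp_one (x : A) :
  x = zero A \/ comp A x (one A) = one A.
Proof.
  pose proof HA as [_ [_ [cc [_ [c0 _]]]]].
  destruct (Hint _ _ (comp_conv_compl_comp_one x)) as [Hy | Hx].
  - right. apply (compl_eq0 _ HB).
    rewrite <- (cc (compl A _)), Hy. exact c0.
  - left. exact Hx.
Qed.

End NonAssociativeAlgebra.

Theorem mainTheorem3 (A : NAAlgebra) :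
  is_nonassociative_algebra A -> integral A -> semi_associative A.
Proof.
  intros HA Hint x.
  rewrite (comp_one_one _ HA).
  destruct (integral_eq0_or_comp_one _ HA Hint x) as [-> | ->].
  - rewrite !(comp_zero_l _ HA). reflexivity.
  - symmetry. exact (comp_one_one _ HA).
Qed.
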